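(* Let $\tau_1,\tau_2\in S_n$ both avoid the patterns $132$ and $123$. Then $\tau_1\circ\tau_2$ is $1$-almost-increasing.
   Context: Permutations $\pi\in S_n$ are viewed as bijections of $\{1,\dots,n\}$ and written in one-line form $[\pi(1)\cdots\pi(n)]$; $(\tau_1\circ\tau_2)(i)=\tau_1(\tau_2(i))$. A permutation $\pi\in S_n$ is $1$-almost-increasing if for every $i\in\{1,\dots,n\}$ there is at most one $j\le i$ with $\pi_j>i$; equivalently, $\pi$ avoids the patterns $4321$, $4312$, $3421$ and $3412$. *)

From mathcomp Require Import all_boot all_fingroup.
Set Implicit Arguments. Unset Strict Implicit. Unset Printing Implicit Defensive.

(* Permutations of {1..n} are modelled as {perm 'I_n}, i.e. bijections of
   {0..n-1}; position i+1 / value v+1 in the paper corresponds to i / v here. *)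

(* Function composition (t1 o t2)(i) = t1 (t2 i), as in the paper. *)
Definition perm_comp n (t1 t2 : {perm 'I_n}) : {perm 'I_n} := (t2 * t1)%g.

(* pi contains the pattern p (a permutation of 1..k in one-line form, as a
   seq nat): there are positions i_1 < ... < i_k whose values are
   order-isomorphic to p. *)
Definition contains_pattern n (pi : {perm 'I_n}) (p : seq nat) : Prop :=
  exists f : 'I_(size p) -> 'I_n,
    (forall a b : 'I_(size p), (a < b)%N -> (f a < f b)%N) /\
    (forall a b : 'I_(size p),
        (pi (f a) < pi (f b))%N = (nth 0 p a < nth 0 p b)%N).

Definition avoids n (pi : {perm 'I_n}) (p : seq nat) : Prop :=
  ~ contains_pattern pi p.

Definition almost_increasing1 n (pi : {perm 'I_n}) : Prop :=
  forall i : 'I_n, #|[set j : 'I_n | (j <= i)%N && (i < pi j)%N]| <= 1.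

From mathcomp Require Import all_boot all_fingroup.
From mathcomp Require Import zify.

Set Implicit Arguments.
Unset Strict Implicit.
Unset Printing Implicit Defensive.

(* A permutation avoiding 132 and 123 has, after each position, at most one
   position carrying a larger value.  Suppose two positions j1 < j2 <= i are
   sent above i by t1 o t2; since t1 o t2 is a bijection, two positions
   k1 < k2 beyond i are sent to at most i.  Applied to t1, the property forces
   t2 k > min (t2 j1, t2 j2) for k = k1, k2, so the position among j1, j2
   realising that minimum has two later larger values under t2. *)

Definition larger_after_unique n (t : {perm 'I_n}) : Prop :=
  forall a b c : 'I_n,
    (a < b)%N -> (a < c)%N -> (t a < t b)%N -> (t a < t c)%N -> b = c.

Lemma avoids_132_123_larger_after_unique n (t : {perm 'I_n}) :
  avoids t [:: 1; 3; 2] -> avoids t [:: 1; 2; 3] -> larger_after_unique t.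
Proof.
move=> t_132 t_123 a b c ab ac tab tac; apply/eqP/negPn/negP => bc.
wlog bc_lt : b c ab ac tab tac bc / (b < c)%N.
  move=> wlog_lt; case: (ltngtP b c) => [|cb|/val_inj eq_bc]; first exact: wlog_lt.
  - by apply: (wlog_lt c b); rewrite // eq_sym.
  - by rewrite eq_bc eqxx in bc.
pose f (k : 'I_3) : 'I_n := nth a [:: a; b; c] k.
have f_mono (x y : 'I_3) : (x < y)%N -> (f x < f y)%N.
  by case: x y => [[|[|[|?]]] ?] [[|[|[|?]]] ?] //= _; rewrite /f /=; lia.
have tbc : t b != t c :> nat by apply: contra bc => /eqP/val_inj/perm_inj ->.
case: (ltngtP (t b) (t c)) => [tbc_lt|tcb_lt|/eqP]; last by rewrite (negPf tbc).
- apply: t_123; exists f; split=> // x y.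
  by case: x y => [[|[|[|?]]] ?] [[|[|[|?]]] ?] //=; rewrite /f /=; lia.
- apply: t_132; exists f; split=> // x y.
  by case: x y => [[|[|[|?]]] ?] [[|[|[|?]]] ?] //=; rewrite /f /=; lia.
Qed.

Lemma larger_after_unique_one_before n (t : {perm 'I_n}) (y x1 x2 : 'I_n) :
  larger_after_unique t -> x1 != x2 ->
  (t y < t x1)%N -> (t y < t x2)%N -> (x1 < y)%N || (x2 < y)%N.
Proof.
move=> t_uniq x12 tyx1 tyx2; rewrite !ltnNge -negb_and; apply/negP=> /andP[yx1 yx2].
have lt_y x : (t y < t x)%N -> (y <= x)%N -> (y < x)%N.
  move=> tyx; rewrite leq_eqVlt => /orP[/eqP/val_inj eq_yx|//].
  by rewrite eq_yx ltnn in tyx.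
by rewrite (t_uniq _ _ _ (lt_y _ tyx1 yx1) (lt_y _ tyx2 yx2) tyx1 tyx2) eqxx in x12.
Qed.

Lemma card_setD_preimset_perm (T : finType) (s : {perm T}) (A : {set T}) :
  #|A :\: s @^-1: A| = #|s @^-1: A :\: A|.
Proof.
apply: (@addnI #|A :&: s @^-1: A|).
by rewrite cardsID setIC cardsID card_preimset //; apply: perm_inj.
Qed.

Lemma card_gt1_ltn n (A : {set 'I_n}) :
  (1 < #|A|)%N -> exists a b : 'I_n, [/\ a \in A, b \in A & (a < b)%N].
Proof.
case/card_gt1P=> [a [b [aA bA ab]]].
case: (ltngtP a b) => [lt_ab|lt_ba|/val_inj eq_ab]; first by exists a, b.
- by exists b, a.
- by rewrite eq_ab eqxx in ab.
Qed.

Theorem proposition7p2 (n : nat) (t1 t2 : {perm 'I_n}) :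
  avoids t1 [:: 1; 3; 2] -> avoids t1 [:: 1; 2; 3] ->
  avoids t2 [:: 1; 3; 2] -> avoids t2 [:: 1; 2; 3] ->
  almost_increasing1 (perm_comp t1 t2).
Proof.
move=> t1_132 t1_123 t2_132 t2_123 i.
have t1_uniq := avoids_132_123_larger_after_unique t1_132 t1_123.
have t2_uniq := avoids_132_123_larger_after_unique t2_132 t2_123.
set p := perm_comp t1 t2; set L := [set j : 'I_n | (j <= i)%N].
have pE k : p k = t1 (t2 k) by rewrite permM.
have -> : [set j : 'I_n | (j <= i)%N && (i < p j)%N] = L :\: p @^-1: L.
  by apply/setP=> j; rewrite !inE -ltnNge andbC.
rewrite leqNgt; apply/negP=> S_gt1.
have T_gt1 : (1 < #|p @^-1: L :\: L|)%N by rewrite -card_setD_preimset_perm.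
have [j1 [j2 [+ + j12]]] := card_gt1_ltn S_gt1.
have [k1 [k2 [+ + k12]]] := card_gt1_ltn T_gt1.
rewrite !inE !pE -!ltnNge => /andP[k1i tk1] /andP[k2i tk2] /andP[tj1 _] /andP[tj2 j2i].
have t2j12 : t2 j1 != t2 j2 by rewrite (inj_eq perm_inj) neq_ltn j12.
have min_lt k : (t1 (t2 k) <= i)%N -> (minn (t2 j1) (t2 j2) < t2 k)%N.
  by move=> tk; rewrite gtn_min (larger_after_unique_one_before t1_uniq) //; lia.
have [j [jj2 t2j]] : exists j : 'I_n, (j <= j2)%N /\ t2 j = minn (t2 j1) (t2 j2) :> nat.
  by case: (leqP (t2 j1) (t2 j2)) => _; [exists j1; rewrite ltnW | exists j2].
have jk1 : (j < k1)%N by lia.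
have jk2 : (j < k2)%N by lia.
have := t2_uniq _ _ _ jk1 jk2; rewrite t2j !min_lt // => /(_ isT isT) eq_k12.
by rewrite eq_k12 ltnn in k12.
Qed.
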